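(* Let $m,n\ge 1$ and let $H^X,H^Z\in\mathbb F_2^{m\times n}$ satisfy $H^X(H^Z)^{\mathsf T}=0$ over $\mathbb F_2$. For $i\in\{1,\dots,m\}$ and $j\in\{1,\dots,n\}$ put $\partial_i^X=\{j: H^X_{ij}=1\}$, $\partial_i^Z=\{j: H^Z_{ij}=1\}$, $\partial_j^X=\{i: H^X_{ij}=1\}$, $\partial_j^Z=\{i: H^Z_{ij}=1\}$. Fix syndromes $\boldsymbol s^X,\boldsymbol s^Z\in\mathbb F_2^m$ and, for each $j$, a local prior $Q_j:\mathbb F_2^2\to[0,\infty)$ (a probability distribution on $(x_j,z_j)$). Let $\mathbb F_4=\{0,1,\omega,\omega^2\}$ with $\omega^2=\omega+1$, let $\phi:\mathbb F_2^2\to\mathbb F_4$, $\phi(x,z)=x+\omega z$ (a bijection), write $\phi^{-1}(\alpha)=(x(\alpha),z(\alpha))$, and set $Q_j^\phi(\alpha)=Q_j(x(\alpha),z(\alpha))$. Define the joint binary posterior on $(\boldsymbol x,\boldsymbol z)\in\mathbb F_2^n\times\mathbb F_2^n$ $$P_2(\boldsymbol x,\boldsymbol z\mid \boldsymbol s^X,\boldsymbol s^Z)=\frac1{Z_2}\prod_{j=1}^n Q_j(x_j,z_j)\prod_{i=1}^m\mathbf 1\Big\{\textstyle\sum_{j'\in\partial_i^X} z_{j'}=s_i^Z\Big\}\prod_{i=1}^m\mathbf 1\Big\{\textstyle\sum_{j'\in\partial_i^Z} x_{j'}=s_i^X\Big\},$$ and the four-state posterior on $\boldsymbol\alpha\in\mathbb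 F_4^n$ $$P_4(\boldsymbol\alpha\mid \boldsymbol s^X,\boldsymbol s^Z)=\frac1{Z_4}\prod_{j=1}^n Q_j^\phi(\alpha_j)\prod_{i=1}^m\mathbf 1\Big\{\textstyle\sum_{j\in\partial_i^X} z(\alpha_j)=s_i^Z\Big\}\prod_{i=1}^m\mathbf 1\Big\{\textstyle\sum_{j\in\partial_i^Z} x(\alpha_j)=s_i^X\Big\},$$ where all sums in indicators are in $\mathbb F_2$ and $Z_2,Z_4$ are normalizing constants (assumed positive). Joint BP (sum-product on the first factorization): for iterations $\ell=0,1,2,\dots$, given check-to-variable messages $\widehat\nu^{(\ell)}_{i\to j}(z)$ ($i\in\partial^X_j$) and $\widehat\mu^{(\ell)}_{i\to j}(x)$ ($i\in\partial_j^Z$), define $$\nu^{(\ell)}_{j\to i}(z)\propto\sum_{x\in\mathbb F_2}Q_j(x,z)\prod_{k\in\partial_j^X\setminus\{i\}}\widehat\nu^{(\ell)}_{k\to j}(z)\prod_{k\in\partial_j^Z}\widehat\mu^{(\ell)}_{k\to j}(x),\quad i\in\partial^X_j,$$ $$\mu^{(\ell)}_{j\to i}(x)\propto\sum_{z\in\mathbb F_2}Q_j(x,z)\prod_{k\in\partial_j^X}\widehat\nu^{(\ell)}_{k\to j}(z)\prod_{k\in\partial_j^Z\setminus\{i\}}\widehat\mu^{(\ell)}_{k\to j}(x),\quad i\in\partial^Z_j,$$ $$\widehat\nu^{(\ell+1)}_{i\to j}(z)\propto\sum_{\substack{(z_b)_{b\in\partial_i^X\setminus\{j\}}\\ z+\sum_b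 z_b=s_i^Z}}\ \prod_{b\in\partial_i^X\setminus\{j\}}\nu^{(\ell)}_{b\to i}(z_b),\qquad \widehat\mu^{(\ell+1)}_{i\to j}(x)\propto\sum_{\substack{(x_b)_{b\in\partial_i^Z\setminus\{j\}}\\ x+\sum_b x_b=s_i^X}}\ \prod_{b\in\partial_i^Z\setminus\{j\}}\mu^{(\ell)}_{b\to i}(x_b),$$ and beliefs $b^{(\ell)}_{2,j}(x,z)\propto Q_j(x,z)\prod_{i\in\partial_j^X}\widehat\nu^{(\ell)}_{i\to j}(z)\prod_{i\in\partial_j^Z}\widehat\mu^{(\ell)}_{i\to j}(x)$. Four-state BP (sum-product on the second factorization): given $\widehat m^{X,(\ell)}_{i\to j}(\alpha)$ ($i\in\partial_j^X$) and $\widehat m^{Z,(\ell)}_{i\to j}(\alpha)$ ($i\in\partial^Z_j$), define $$m^{X,(\ell)}_{j\to i}(\alpha)\propto Q^\phi_j(\alpha)\prod_{k\in\partial_j^X\setminus\{i\}}\widehat m^{X,(\ell)}_{k\to j}(\alpha)\prod_{k\in\partial_j^Z}\widehat m^{Z,(\ell)}_{k\to j}(\alpha),\qquad m^{Z,(\ell)}_{j\to i}(\alpha)\propto Q^\phi_j(\alpha)\prod_{k\in\partial_j^X}\widehat m^{X,(\ell)}_{k\to j}(\alpha)\prod_{k\in\partial_j^Z\setminus\{i\}}\widehat m^{Z,(\ell)}_{k\to j}(\alpha),$$ $$\widehat m^{X,(\ell+1)}_{i\to j}(\alpha)\propto\sum_{\substack{(\alpha_b)_{b\in\partial_i^X\setminus\{j\}}\\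 z(\alpha)+\sum_b z(\alpha_b)=s_i^Z}}\ \prod_{b}m^{X,(\ell)}_{b\to i}(\alpha_b),\qquad \widehat m^{Z,(\ell+1)}_{i\to j}(\alpha)\propto\sum_{\substack{(\alpha_b)_{b\in\partial_i^Z\setminus\{j\}}\\ x(\alpha)+\sum_b x(\alpha_b)=s_i^X}}\ \prod_{b}m^{Z,(\ell)}_{b\to i}(\alpha_b),$$ and beliefs $b^{(\ell)}_{4,j}(\alpha)\propto Q_j^\phi(\alpha)\prod_{i\in\partial_j^X}\widehat m^{X,(\ell)}_{i\to j}(\alpha)\prod_{i\in\partial_j^Z}\widehat m^{Z,(\ell)}_{i\to j}(\alpha)$. Assume the two decoders are initialized compatibly, i.e. for all $j$, $x,z\in\mathbb F_2$: $\widehat m^{X,(0)}_{i\to j}(\phi(x,z))\propto\widehat\nu^{(0)}_{i\to j}(z)$ for $i\in\partial_j^X$ and $\widehat m^{Z,(0)}_{i\to j}(\phi(x,z))\propto\widehat\mu^{(0)}_{i\to j}(x)$ for $i\in\partial_j^Z$ (e.g. all initial check-to-variable messages uniform). Then: (1) For all $\boldsymbol x,\boldsymbol z\in\mathbb F_2^n$, $P_4(\phi(\boldsymbol x,\boldsymbol z)\mid\boldsymbol s^X,\boldsymbol s^Z)=P_2(\boldsymbol x,\boldsymbol z\mid\boldsymbol s^X,\boldsymbol s^Z)$, where $\phi(\boldsymbol x,\boldsymbol z)_j=\phi(x_j,z_j)$. (2) For every iteration $\ell$, every $j$ and all $x,z\in\mathbb F_2$: $\widehat m^{X,(\ell)}_{i\to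 j}(\phi(x,z))\propto\widehat\nu^{(\ell)}_{i\to j}(z)$ for $i\in\partial_j^X$, and $\widehat m^{Z,(\ell)}_{i\to j}(\phi(x,z))\propto\widehat\mu^{(\ell)}_{i\to j}(x)$ for $i\in\partial_j^Z$. (3) For every $\ell$: $\nu^{(\ell)}_{j\to i}(z)\propto\sum_{x\in\mathbb F_2}m^{X,(\ell)}_{j\to i}(\phi(x,z))$ for $i\in\partial_j^X$, and $\mu^{(\ell)}_{j\to i}(x)\propto\sum_{z\in\mathbb F_2}m^{Z,(\ell)}_{j\to i}(\phi(x,z))$ for $i\in\partial_j^Z$. (4) For every $\ell$, $j\in\{1,\dots,n\}$ and $(\xi,\zeta)\in\mathbb F_2^2$, the normalized beliefs satisfy $b^{(\ell)}_{4,j}(\phi(\xi,\zeta))=b^{(\ell)}_{2,j}(\xi,\zeta)$. (5) Consequently, fixing any tie-breaking order on $\mathbb F_2^2$ and the induced order on $\mathbb F_4$ via $\phi$, the hard decisions $\widehat\alpha^{(\ell)}_j=\arg\max_{\alpha\in\mathbb F_4}b^{(\ell)}_{4,j}(\alpha)$ and $(\widetilde x^{(\ell)}_j,\widetilde z^{(\ell)}_j)=\arg\max_{(x,z)\in\mathbb F_2^2}b^{(\ell)}_{2,j}(x,z)$ satisfy $\widehat\alpha^{(\ell)}_j=\phi(\widetilde x^{(\ell)}_j,\widetilde z^{(\ell)}_j)$.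
   Context: Messages are nonnegative functions on the alphabet of a single variable ($\mathbb F_2$ or $\mathbb F_4$), identified up to multiplication by a positive constant; the symbol $\propto$ means equality up to such a positive (edge-local) constant. Beliefs are normalized to probability distributions (they are assumed not identically zero). The hard-decision argmax ties are broken by the fixed common order. This describes CSS syndrome decoding: $x_j,z_j$ are the $X$- and $Z$-components of the Pauli error on qubit $j$, rows of $H^X$ constrain $\boldsymbol z$ via $H^X\boldsymbol z=\boldsymbol s^Z$ and rows of $H^Z$ constrain $\boldsymbol x$ via $H^Z\boldsymbol x=\boldsymbol s^X$. *)

From HB Require Import structures.
From mathcomp Require Import all_boot all_order all_algebra.
Set Implicit Arguments. Unset Strict Implicit. Unset Printing Implicit Defensive.
Import Order.TTheory GRing.Theory Num.Theory.
Local Open Scope ring_scope.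

Notation F2 := 'F_2.

(* F_4 = {0, 1, w, w^2} with w^2 = w + 1; only its elements and the map phi
   (and its inverse) are used by the statement. *)
Inductive F4 := F4_0 | F4_1 | F4_w | F4_w2.

Definition F4_to_pair (a : F4) : bool * bool :=
  match a with F4_0 => (false, false) | F4_1 => (true, false)
             | F4_w => (false, true) | F4_w2 => (true, true) end.
Definition F4_of_pair (p : bool * bool) : F4 :=
  match p with (false, false) => F4_0 | (true, false) => F4_1
             | (false, true) => F4_w | (true, true) => F4_w2 end.
Lemma F4_pairK : cancel F4_to_pair F4_of_pair. Proof. by case. Qed.
HB.instance Definition _ := Finite.copy F4 (can_type F4_pairK).

(* phi(x,z) = x + w z *)
Definition phi (x z : F2) : F4 :=
  if x == 0 then (if z == 0 then F4_0 else F4_w)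
  else (if z == 0 then F4_1 else F4_w2).

Definition xF4 (a : F4) : F2 :=
  match a with F4_0 | F4_w => 0 | F4_1 | F4_w2 => 1 end.
Definition zF4 (a : F4) : F2 :=
  match a with F4_0 | F4_1 => 0 | F4_w | F4_w2 => 1 end.

Section Defs.
Variables (R : realFieldType) (m n : nat).
Variables (HX HZ : 'M[F2]_(m, n)) (sX sZ : 'I_m -> F2).
Variable Q : 'I_n -> F2 -> F2 -> R.

Definition dchk (H : 'M[F2]_(m, n)) (i : 'I_m) : {set 'I_n} := [set j | H i j == 1].
Definition dvar (H : 'M[F2]_(m, n)) (j : 'I_n) : {set 'I_m} := [set i | H i j == 1].

Definition propto (T : Type) (f g : T -> R) := exists2 c : R, 0 < c & forall a, f a = c * g a.

Definition sub (S : {set 'I_n}) := {b : 'I_n | b \in S}.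

Definition Qphi (j : 'I_n) (a : F4) : R := Q j (xF4 a) (zF4 a).

Definition w2 (x z : {ffun 'I_n -> F2}) : R :=
  (\prod_(j < n) Q j (x j) (z j)) *
  (\prod_(i < m) ((\sum_(j' in dchk HX i) z j') == sZ i)%:R) *
  (\prod_(i < m) ((\sum_(j' in dchk HZ i) x j') == sX i)%:R).
Definition Z2 : R := \sum_(x : {ffun 'I_n -> F2}) \sum_(z : {ffun 'I_n -> F2}) w2 x z.
Definition P2 x z : R := w2 x z / Z2.

Definition w4 (a : {ffun 'I_n -> F4}) : R :=
  (\prod_(j < n) Qphi j (a j)) *
  (\prod_(i < m) ((\sum_(j in dchk HX i) zF4 (a j)) == sZ i)%:R) *
  (\prod_(i < m) ((\sum_(j in dchk HZ i) xF4 (a j)) == sX i)%:R).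
Definition Z4 : R := \sum_(a : {ffun 'I_n -> F4}) w4 a.
Definition P4 a : R := w4 a / Z4.

Definition phivec (x z : {ffun 'I_n -> F2}) : {ffun 'I_n -> F4} :=
  [ffun j => phi (x j) (z j)].

(* check-to-variable messages: 'I_m -> 'I_n -> F2 -> R  (i -> j)
   variable-to-check messages: 'I_n -> 'I_m -> F2 -> R  (j -> i) *)
Definition nu_upd (nuh muh : 'I_m -> 'I_n -> F2 -> R) (j : 'I_n) (i : 'I_m) (z : F2) : R :=
  \sum_(x : F2) Q j x z * (\prod_(k in dvar HX j :\ i) nuh k j z)
                        * (\prod_(k in dvar HZ j) muh k j x).
Definition mu_upd (nuh muh : 'I_m -> 'I_n -> F2 -> R) (j : 'I_n) (i : 'I_m) (x : F2) : R :=
  \sum_(z : F2) Q j x z * (\prod_(k in dvar HX j) nuh k j z)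
                        * (\prod_(k in dvar HZ j :\ i) muh k j x).
Definition nuh_upd (nu : 'I_n -> 'I_m -> F2 -> R) (i : 'I_m) (j : 'I_n) (z : F2) : R :=
  \sum_(w : {ffun sub (dchk HX i :\ j) -> F2} | z + \sum_b w b == sZ i)
     \prod_b nu (val b) i (w b).
Definition muh_upd (mu : 'I_n -> 'I_m -> F2 -> R) (i : 'I_m) (j : 'I_n) (x : F2) : R :=
  \sum_(w : {ffun sub (dchk HZ i :\ j) -> F2} | x + \sum_b w b == sX i)
     \prod_b mu (val b) i (w b).
Definition b2u (nuh muh : 'I_m -> 'I_n -> F2 -> R) (j : 'I_n) (x z : F2) : R :=
  Q j x z * (\prod_(i in dvar HX j) nuh i j z) * (\prod_(i in dvar HZ j) muh i j x).
Definition b2 (nuh muh : 'I_m -> 'I_n -> F2 -> R) (j : 'I_n) (x z : F2) : R :=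
  b2u nuh muh j x z / (\sum_(x' : F2) \sum_(z' : F2) b2u nuh muh j x' z').

Definition mX_upd (mXh mZh : 'I_m -> 'I_n -> F4 -> R) (j : 'I_n) (i : 'I_m) (a : F4) : R :=
  Qphi j a * (\prod_(k in dvar HX j :\ i) mXh k j a) * (\prod_(k in dvar HZ j) mZh k j a).
Definition mZ_upd (mXh mZh : 'I_m -> 'I_n -> F4 -> R) (j : 'I_n) (i : 'I_m) (a : F4) : R :=
  Qphi j a * (\prod_(k in dvar HX j) mXh k j a) * (\prod_(k in dvar HZ j :\ i) mZh k j a).
Definition mXh_upd (mX : 'I_n -> 'I_m -> F4 -> R) (i : 'I_m) (j : 'I_n) (a : F4) : R :=
  \sum_(w : {ffun sub (dchk HX i :\ j) -> F4} | zF4 a + \sum_b zF4 (w b) == sZ i)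
     \prod_b mX (val b) i (w b).
Definition mZh_upd (mZ : 'I_n -> 'I_m -> F4 -> R) (i : 'I_m) (j : 'I_n) (a : F4) : R :=
  \sum_(w : {ffun sub (dchk HZ i :\ j) -> F4} | xF4 a + \sum_b xF4 (w b) == sX i)
     \prod_b mZ (val b) i (w b).
Definition b4u (mXh mZh : 'I_m -> 'I_n -> F4 -> R) (j : 'I_n) (a : F4) : R :=
  Qphi j a * (\prod_(i in dvar HX j) mXh i j a) * (\prod_(i in dvar HZ j) mZh i j a).
Definition b4 (mXh mZh : 'I_m -> 'I_n -> F4 -> R) (j : 'I_n) (a : F4) : R :=
  b4u mXh mZh j a / (\sum_(a' : F4) b4u mXh mZh j a').

End Defs.

(* hard decision: the first element of the tie-breaking order s attaining the
   maximum of b (the default d is never used when s enumerates the whole type) *)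
Definition argmax_by (R : realFieldType) (T : finType) (s : seq T) (d : T) (b : T -> R) : T :=
  head d [seq p <- s | [forall q, b q <= b p]].

From mathcomp Require Import all_boot all_order all_algebra.
Set Implicit Arguments. Unset Strict Implicit. Unset Printing Implicit Defensive.
Import Order.TTheory GRing.Theory Num.Theory.
Local Open Scope ring_scope.

(* phi identifies F_4 with F_2 x F_2, and every factor of the four-state graph is either the
   prior Q_j o phi^-1 or reads one coordinate of each alpha_j: X-checks see only z, Z-checks
   only x.  Hence P_4 o phi = P_2 termwise.  For the decoders, induction on l shows that a
   four-state X-check message, as a function of (x, z), is proportional to the binary one in z
   alone (dually for Z-checks).  At a variable node the four-state outgoing message is then
   proportional to the binary local factor Q_j(x, z) prod nuh(z) prod muh(x), whose sum over x
   is the binary message nu.  At a check node the constraint reads only z, so the sum over the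
   incoming alpha_b splits into a sum over the z_b of products of the marginals
   sum_x m(phi(x, z_b)), i.e. of binary messages.  Beliefs are proportional, hence equal once
   normalized, and so are their argmaxes. *)

Lemma F2_cases (x : F2) : x = 0 \/ x = 1.
Proof. by case: x => [[|[|k]]] //= x_lt; [left | right]; apply: val_inj. Qed.

Lemma xF4_phi x z : xF4 (phi x z) = x.
Proof. by case: (F2_cases x) => ->; case: (F2_cases z) => ->. Qed.

Lemma zF4_phi x z : zF4 (phi x z) = z.
Proof. by case: (F2_cases x) => ->; case: (F2_cases z) => ->. Qed.

Lemma phi_xzF4 a : phi (xF4 a) (zF4 a) = a.
Proof. by case: a. Qed.

Lemma Qphi_phi (R : realFieldType) n (Q : 'I_n -> F2 -> F2 -> R) j x z :
  Qphi Q j (phi x z) = Q j x z.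
Proof. by rewrite /Qphi xF4_phi zF4_phi. Qed.

Lemma sum_glue (R : nmodType) (A B C : finType)
    (c : A -> B -> C) (ca : C -> A) (cb : C -> B) :
  (forall a b, ca (c a b) = a) -> (forall a b, cb (c a b) = b) ->
  (forall y, c (ca y) (cb y) = y) ->
  forall F : C -> R, \sum_y F y = \sum_a \sum_b F (c a b).
Proof.
move=> caK cbK cK F; rewrite pair_big (reindex (fun p : A * B => c p.1 p.2)) //.
by apply: onW_bij; exists (fun y => (ca y, cb y)) => [[a b]|y]; rewrite /= ?caK ?cbK ?cK.
Qed.

Section Glue.
Variables (R : comPzSemiRingType) (A : finType) (B : finZmodType) (C : finType).
Variables (c : A -> B -> C) (ca : C -> A) (cb : C -> B).
Hypotheses (caK : forall a b, ca (c a b) = a) (cbK : forall a b, cb (c a b) = b).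
Hypothesis cK : forall y, c (ca y) (cb y) = y.

Lemma sum_ffun_glue (S : finType) (F : {ffun S -> C} -> R) :
  \sum_w F w = \sum_(wa : {ffun S -> A}) \sum_(wb : {ffun S -> B})
                 F [ffun s => c (wa s) (wb s)].
Proof.
apply: (@sum_glue R {ffun S -> A} {ffun S -> B} {ffun S -> C}
         (fun wa wb => [ffun s => c (wa s) (wb s)])
         (fun w => [ffun s => ca (w s)]) (fun w => [ffun s => cb (w s)]))
  => [wa wb|wa wb|w]; apply/ffunP => s; by rewrite !ffunE ?caK ?cbK ?cK.
Qed.

Lemma sum_check_marginal (S : finType) (t0 t : B) (f : S -> C -> R) :
  \sum_(w : {ffun S -> C} | t0 + \sum_s cb (w s) == t) \prod_s f s (w s) =
  \sum_(wb : {ffun S -> B} | t0 + \sum_s wb s == t) \prod_s \sum_a f s (c a (wb s)).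
Proof.
rewrite big_mkcond sum_ffun_glue exchange_big [RHS]big_mkcond.
apply: eq_bigr => wb _.
have glue_cb (wa : {ffun S -> A}) :
    \sum_s cb ([ffun s => c (wa s) (wb s)] s) = \sum_s wb s.
  by apply: eq_bigr => s _; rewrite ffunE cbK.
under eq_bigr => wa _ do rewrite glue_cb.
case: ifP => _; last by rewrite big1.
by rewrite bigA_distr_bigA; apply: eq_bigr => wa _; apply: eq_bigr => s _; rewrite ffunE.
Qed.

End Glue.

Section Proportionality.
Variable R : realFieldType.
Implicit Types T I : Type.

Lemma eq_propto T (f g : T -> R) : f =1 g -> propto f g.
Proof. by move=> fg; exists 1 => // t; rewrite mul1r. Qed.

Lemma propto_sym T (f g : T -> R) : propto f g -> propto g f.
Proof.
case=> c c_gt0 fg; exists c^-1; first by rewrite invr_gt0.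
by move=> t; rewrite fg mulKf ?gt_eqF.
Qed.

Lemma propto_trans T (g f h : T -> R) : propto f g -> propto g h -> propto f h.
Proof.
case=> c c_gt0 fg [d d_gt0 gh]; exists (c * d); first exact: mulr_gt0.
by move=> t; rewrite fg gh mulrA.
Qed.

Lemma propto_comp T T' (h : T' -> T) (f g : T -> R) :
  propto f g -> propto (fun t => f (h t)) (fun t => g (h t)).
Proof. by case=> c c_gt0 fg; exists c. Qed.

Lemma propto_mul T (f1 g1 f2 g2 : T -> R) :
  propto f1 g1 -> propto f2 g2 ->
  propto (fun t => f1 t * f2 t) (fun t => g1 t * g2 t).
Proof.
case=> c c_gt0 fg1 [d d_gt0 fg2]; exists (c * d); first exact: mulr_gt0.
by move=> t; rewrite fg1 fg2 mulrACA.
Qed.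

Lemma propto_prod I T (r : seq I) (P : pred I) (f g : I -> T -> R) :
  (forall i, P i -> propto (f i) (g i)) ->
  propto (fun w : I -> T => \prod_(i <- r | P i) f i (w i))
         (fun w => \prod_(i <- r | P i) g i (w i)).
Proof.
move=> fg; elim: r => [|i r IHr]; first by apply: eq_propto => w; rewrite !big_nil.
case Pi: (P i); last by case: IHr => C C_gt0 IH; exists C => // w; rewrite !big_cons Pi.
have := propto_mul (propto_comp (fun w : I -> T => w i) (fg i Pi)) IHr.
by case=> C C_gt0 IH; exists C => // w; rewrite !big_cons Pi IH.
Qed.

Lemma propto_sum I T T' (r : seq I) (P : pred I) (h : I -> T' -> T) (f g : T -> R) :
  propto f g ->
  propto (fun t => \sum_(i <- r | P i) f (h i t)) (fun t => \sum_(i <- r | P i) g (h i t)).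
Proof.
case=> c c_gt0 fg; exists c => // t.
by rewrite mulr_sumr; apply: eq_bigr => i _; rewrite fg.
Qed.

Lemma propto_normalized (T : finType) (f g : T -> R) : propto f g ->
  forall t, f t / \sum_u f u = g t / \sum_u g u.
Proof.
case=> c c_gt0 fg t; under eq_bigr => u _ do rewrite fg.
by rewrite fg -mulr_sumr -mulf_div divff ?mul1r ?gt_eqF.
Qed.

End Proportionality.

Lemma argmax_by_map (R : realFieldType) (T U : finType) (g : T -> U) (h : U -> T)
    (b : U -> R) (b' : T -> R) (s : seq T) (d : T) :
  cancel h g -> (forall t, b (g t) = b' t) ->
  argmax_by [seq g t | t <- s] (g d) b = g (argmax_by s d b').
Proof.
move=> hK bg; rewrite /argmax_by filter_map.
rewrite (@eq_filter _ _ (fun t => [forall q, b' q <= b' t])); first by case: filter.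
move=> t /=; apply/forallP/forallP => max_t q; first by rewrite -!bg.
by rewrite -(hK q) !bg.
Qed.

Lemma mem_dvar m n (H : 'M[F2]_(m, n)) i j : (i \in dvar H j) = (j \in dchk H i).
Proof. by rewrite !inE. Qed.

Section FourStateBP.
Variables (R : realFieldType) (m n : nat) (HX HZ : 'M[F2]_(m, n)).
Variables (sX sZ : 'I_m -> F2) (Q : 'I_n -> F2 -> F2 -> R).

Lemma w4_phivec x z : w4 HX HZ sX sZ Q (phivec x z) = w2 HX HZ sX sZ Q x z.
Proof.
rewrite /w4 /w2; congr (_ * _ * _).
- by apply: eq_bigr => j _; rewrite ffunE Qphi_phi.
- by apply: eq_bigr => i _; under eq_bigr => j _ do rewrite ffunE zF4_phi.
- by apply: eq_bigr => i _; under eq_bigr => j _ do rewrite ffunE xF4_phi.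
Qed.

Lemma Z4_Z2 : Z4 HX HZ sX sZ Q = Z2 HX HZ sX sZ Q.
Proof.
rewrite /Z4 (sum_ffun_glue xF4_phi zF4_phi phi_xzF4).
by apply: eq_bigr => x _; apply: eq_bigr => z _; apply: w4_phivec.
Qed.

Lemma P4_phivec x z : P4 HX HZ sX sZ Q (phivec x z) = P2 HX HZ sX sZ Q x z.
Proof. by rewrite /P4 /P2 w4_phivec Z4_Z2. Qed.

Definition compat_check_msgs (nuh muh : 'I_m -> 'I_n -> F2 -> R)
    (mXh mZh : 'I_m -> 'I_n -> F4 -> R) :=
  forall j,
    (forall i, i \in dvar HX j ->
       propto (fun p : F2 * F2 => mXh i j (phi p.1 p.2)) (fun p => nuh i j p.2)) /\
    (forall i, i \in dvar HZ j ->
       propto (fun p : F2 * F2 => mZh i j (phi p.1 p.2)) (fun p => muh i j p.1)).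

Definition compat_var_msgs (nu mu : 'I_n -> 'I_m -> F2 -> R)
    (mX mZ : 'I_n -> 'I_m -> F4 -> R) :=
  forall j,
    (forall i, i \in dvar HX j ->
       propto (nu j i) (fun z => \sum_(x : F2) mX j i (phi x z))) /\
    (forall i, i \in dvar HZ j ->
       propto (mu j i) (fun x => \sum_(z : F2) mZ j i (phi x z))).

Section VariableNode.
Variables (nuh muh : 'I_m -> 'I_n -> F2 -> R) (mXh mZh : 'I_m -> 'I_n -> F4 -> R).
Hypothesis check_compat : compat_check_msgs nuh muh mXh mZh.

Lemma local_factor_propto j (SX SZ : {set 'I_m}) :
  SX \subset dvar HX j -> SZ \subset dvar HZ j ->
  propto (fun p : F2 * F2 => Qphi Q j (phi p.1 p.2) *
            (\prod_(k in SX) mXh k j (phi p.1 p.2)) * (\prod_(k in SZ) mZh k j (phi p.1 p.2)))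
         (fun p => Q j p.1 p.2 * (\prod_(k in SX) nuh k j p.2) * (\prod_(k in SZ) muh k j p.1)).
Proof.
move=> /subsetP sSX /subsetP sSZ.
have prod_propto (S : {set 'I_m}) (f g : 'I_m -> F2 * F2 -> R) :
    (forall k, k \in S -> propto (f k) (g k)) ->
    propto (fun p => \prod_(k in S) f k p) (fun p => \prod_(k in S) g k p).
  move=> fg; have := propto_prod (index_enum _) (P := fun k => k \in S) fg.
  exact: (propto_comp (fun p (k : 'I_m) => p)).
apply: propto_mul; first apply: propto_mul.
- by apply: eq_propto => p; rewrite Qphi_phi.
- by apply: prod_propto => k /sSX /(proj1 (check_compat j)).
- by apply: prod_propto => k /sSZ /(proj2 (check_compat j)).
Qed.

Lemma nu_propto_marginal j i (nu_ji : F2 -> R) (mX_ji : F4 -> R) : i \in dvar HX j ->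
  propto nu_ji (nu_upd HX HZ Q nuh muh j i) -> propto mX_ji (mX_upd HX HZ Q mXh mZh j i) ->
  propto nu_ji (fun z => \sum_(x : F2) mX_ji (phi x z)).
Proof.
move=> Hi nuE mXE; apply: (propto_trans nuE); apply: propto_sym.
apply: (propto_trans (propto_sum _ _ (fun x z => phi x z) mXE)).
exact: (propto_sum _ _ (fun x z => (x, z)) (local_factor_propto (subD1set _ _) (subxx _))).
Qed.

Lemma mu_propto_marginal j i (mu_ji : F2 -> R) (mZ_ji : F4 -> R) : i \in dvar HZ j ->
  propto mu_ji (mu_upd HX HZ Q nuh muh j i) -> propto mZ_ji (mZ_upd HX HZ Q mXh mZh j i) ->
  propto mu_ji (fun x => \sum_(z : F2) mZ_ji (phi x z)).
Proof.
move=> Hi muE mZE; apply: (propto_trans muE); apply: propto_sym.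
apply: (propto_trans (propto_sum _ _ (fun z x => phi x z) mZE)).
exact: (propto_sum _ _ (fun z x => (x, z)) (local_factor_propto (subxx _) (subD1set _ _))).
Qed.

Lemma b4_phi j x z : b4 HX HZ Q mXh mZh j (phi x z) = b2 HX HZ Q nuh muh j x z.
Proof.
rewrite /b4 /b2 (sum_glue xF4_phi zF4_phi phi_xzF4) !pair_big.
exact: (propto_normalized (local_factor_propto (subxx _) (subxx _)) (x, z)).
Qed.

End VariableNode.

Lemma compat_var_msgs_step nuh muh mXh mZh nu mu mX mZ :
  compat_check_msgs nuh muh mXh mZh ->
  (forall j i, i \in dvar HX j -> propto (nu j i) (nu_upd HX HZ Q nuh muh j i)) ->
  (forall j i, i \in dvar HZ j -> propto (mu j i) (mu_upd HX HZ Q nuh muh j i)) ->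
  (forall j i, i \in dvar HX j -> propto (mX j i) (mX_upd HX HZ Q mXh mZh j i)) ->
  (forall j i, i \in dvar HZ j -> propto (mZ j i) (mZ_upd HX HZ Q mXh mZh j i)) ->
  compat_var_msgs nu mu mX mZ.
Proof.
move=> check_compat nuE muE mXE mZE j; split=> i Hi.
- exact: (nu_propto_marginal check_compat Hi (nuE j i Hi) (mXE j i Hi)).
- exact: (mu_propto_marginal check_compat Hi (muE j i Hi) (mZE j i Hi)).
Qed.

Section CheckNode.
Variables (nu mu : 'I_n -> 'I_m -> F2 -> R) (mX mZ : 'I_n -> 'I_m -> F4 -> R).
Hypothesis var_compat : compat_var_msgs nu mu mX mZ.

Lemma mXh_upd_propto i j :
  propto (fun p : F2 * F2 => mXh_upd HX sZ mX i j (phi p.1 p.2))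
         (fun p => nuh_upd HX sZ nu i j p.2).
Proof.
have marginal_propto (b : sub (dchk HX i :\ j)) :
    propto (fun t => \sum_(u : F2) mX (val b) i (phi u t)) (nu (val b) i).
  apply/propto_sym/(proj1 (var_compat (val b))).
  by rewrite mem_dvar; case/setD1P: (valP b).
have [C C_gt0 prodE] := propto_prod (index_enum _) (P := xpredT) (fun b _ => marginal_propto b).
exists C => // -[x z] /=; rewrite /mXh_upd /nuh_upd zF4_phi.
rewrite (sum_check_marginal xF4_phi zF4_phi phi_xzF4 _ _ (fun b a => mX (val b) i a)) mulr_sumr.
by apply: eq_bigr => w _; apply: prodE.
Qed.

Lemma mZh_upd_propto i j :
  propto (fun p : F2 * F2 => mZh_upd HZ sX mZ i j (phi p.1 p.2))
         (fun p => muh_upd HZ sX mu i j p.1).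
Proof.
have marginal_propto (b : sub (dchk HZ i :\ j)) :
    propto (fun t => \sum_(u : F2) mZ (val b) i (phi t u)) (mu (val b) i).
  apply/propto_sym/(proj2 (var_compat (val b))).
  by rewrite mem_dvar; case/setD1P: (valP b).
have [C C_gt0 prodE] := propto_prod (index_enum _) (P := xpredT) (fun b _ => marginal_propto b).
exists C => // -[x z] /=; rewrite /mZh_upd /muh_upd xF4_phi.
rewrite (sum_check_marginal (fun u t => zF4_phi t u) (fun u t => xF4_phi t u) phi_xzF4 _ _
           (fun b a => mZ (val b) i a)) mulr_sumr.
by apply: eq_bigr => w _; apply: prodE.
Qed.

End CheckNode.

Lemma compat_check_msgs_step nu mu mX mZ nuh muh mXh mZh :
  compat_var_msgs nu mu mX mZ ->
  (forall i j, j \in dchk HX i -> propto (nuh i j) (nuh_upd HX sZ nu i j)) ->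
  (forall i j, j \in dchk HZ i -> propto (muh i j) (muh_upd HZ sX mu i j)) ->
  (forall i j, j \in dchk HX i -> propto (mXh i j) (mXh_upd HX sZ mX i j)) ->
  (forall i j, j \in dchk HZ i -> propto (mZh i j) (mZh_upd HZ sX mZ i j)) ->
  compat_check_msgs nuh muh mXh mZh.
Proof.
move=> var_compat nuhE muhE mXhE mZhE j; split=> i; rewrite mem_dvar => Hj.
- apply: propto_trans (propto_comp (fun p : F2 * F2 => phi p.1 p.2) (mXhE i j Hj)) _.
  apply: propto_trans (mXh_upd_propto var_compat i j) _.
  exact: (propto_sym (propto_comp snd (nuhE i j Hj))).
- apply: propto_trans (propto_comp (fun p : F2 * F2 => phi p.1 p.2) (mZhE i j Hj)) _.
  apply: propto_trans (mZh_upd_propto var_compat i j) _.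
  exact: (propto_sym (propto_comp fst (muhE i j Hj))).
Qed.

End FourStateBP.

Theorem theorem1
  (R : realFieldType) (m n : nat) (Hm : (0 < m)%N) (Hn : (0 < n)%N)
  (HX HZ : 'M[F2]_(m, n)) (Horth : HX *m HZ^T = 0)
  (sX sZ : 'I_m -> F2)
  (Q : 'I_n -> F2 -> F2 -> R)
  (Q_ge0 : forall j x z, 0 <= Q j x z)
  (Q_sum1 : forall j, \sum_(x : F2) \sum_(z : F2) Q j x z = 1)
  (Z2_gt0 : 0 < Z2 HX HZ sX sZ Q)
  (Z4_gt0 : 0 < Z4 HX HZ sX sZ Q)
  (* joint binary BP messages *)
  (nuh muh : nat -> 'I_m -> 'I_n -> F2 -> R)
  (nu mu : nat -> 'I_n -> 'I_m -> F2 -> R)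
  (* four-state BP messages *)
  (mXh mZh : nat -> 'I_m -> 'I_n -> F4 -> R)
  (mX mZ : nat -> 'I_n -> 'I_m -> F4 -> R)
  (* messages are nonnegative *)
  (nuh_ge0 : forall l i j z, 0 <= nuh l i j z)
  (muh_ge0 : forall l i j x, 0 <= muh l i j x)
  (nu_ge0 : forall l j i z, 0 <= nu l j i z)
  (mu_ge0 : forall l j i x, 0 <= mu l j i x)
  (mXh_ge0 : forall l i j a, 0 <= mXh l i j a)
  (mZh_ge0 : forall l i j a, 0 <= mZh l i j a)
  (mX_ge0 : forall l j i a, 0 <= mX l j i a)
  (mZ_ge0 : forall l j i a, 0 <= mZ l j i a)
  (* joint BP update rules (up to positive constants) *)
  (nu_def : forall l j i, i \in dvar HX j ->
     propto (nu l j i) (nu_upd HX HZ Q (nuh l) (muh l) j i))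
  (mu_def : forall l j i, i \in dvar HZ j ->
     propto (mu l j i) (mu_upd HX HZ Q (nuh l) (muh l) j i))
  (nuh_def : forall l i j, j \in dchk HX i ->
     propto (nuh l.+1 i j) (nuh_upd HX sZ (nu l) i j))
  (muh_def : forall l i j, j \in dchk HZ i ->
     propto (muh l.+1 i j) (muh_upd HZ sX (mu l) i j))
  (* four-state BP update rules (up to positive constants) *)
  (mX_def : forall l j i, i \in dvar HX j ->
     propto (mX l j i) (mX_upd HX HZ Q (mXh l) (mZh l) j i))
  (mZ_def : forall l j i, i \in dvar HZ j ->
     propto (mZ l j i) (mZ_upd HX HZ Q (mXh l) (mZh l) j i))
  (mXh_def : forall l i j, j \in dchk HX i ->
     propto (mXh l.+1 i j) (mXh_upd HX sZ (mX l) i j))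
  (mZh_def : forall l i j, j \in dchk HZ i ->
     propto (mZh l.+1 i j) (mZh_upd HZ sX (mZ l) i j))
  (* beliefs are not identically zero *)
  (b2_nz : forall l j, \sum_(x : F2) \sum_(z : F2) b2u HX HZ Q (nuh l) (muh l) j x z != 0)
  (b4_nz : forall l j, \sum_(a : F4) b4u HX HZ Q (mXh l) (mZh l) j a != 0)
  (* compatible initialization *)
  (initX : forall j i, i \in dvar HX j ->
     propto (fun p : F2 * F2 => mXh 0%N i j (phi p.1 p.2)) (fun p => nuh 0%N i j p.2))
  (initZ : forall j i, i \in dvar HZ j ->
     propto (fun p : F2 * F2 => mZh 0%N i j (phi p.1 p.2)) (fun p => muh 0%N i j p.1)) :
  [/\
   (* (1) *)
   (forall x z : {ffun 'I_n -> F2},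
      P4 HX HZ sX sZ Q (phivec x z) = P2 HX HZ sX sZ Q x z),
   (* (2) *)
   (forall l j, (forall i, i \in dvar HX j ->
       propto (fun p : F2 * F2 => mXh l i j (phi p.1 p.2)) (fun p => nuh l i j p.2)) /\
     (forall i, i \in dvar HZ j ->
       propto (fun p : F2 * F2 => mZh l i j (phi p.1 p.2)) (fun p => muh l i j p.1))),
   (* (3) *)
   (forall l j, (forall i, i \in dvar HX j ->
       propto (nu l j i) (fun z => \sum_(x : F2) mX l j i (phi x z))) /\
     (forall i, i \in dvar HZ j ->
       propto (mu l j i) (fun x => \sum_(z : F2) mZ l j i (phi x z)))),
   (* (4) *)
   (forall l j (xi zeta : F2),
      b4 HX HZ Q (mXh l) (mZh l) j (phi xi zeta) = b2 HX HZ Q (nuh l) (muh l) j xi zeta)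
   & (* (5) *)
   (forall (s : seq (F2 * F2)), uniq s -> (forall p, p \in s) ->
    forall l j,
      argmax_by [seq phi p.1 p.2 | p <- s] (phi 0 0) (b4 HX HZ Q (mXh l) (mZh l) j)
      = (let p := argmax_by s (0, 0) (fun p : F2 * F2 => b2 HX HZ Q (nuh l) (muh l) j p.1 p.2)
         in phi p.1 p.2))].
Proof.
have check_compat l : compat_check_msgs HX HZ (nuh l) (muh l) (mXh l) (mZh l).
  elim: l => [|l IHl]; first by move=> j; split=> i; [exact: initX | exact: initZ].
  apply: compat_check_msgs_step (nuh_def l) (muh_def l) (mXh_def l) (mZh_def l).
  exact: compat_var_msgs_step IHl (nu_def l) (mu_def l) (mX_def l) (mZ_def l).
have var_compat l : compat_var_msgs HX HZ (nu l) (mu l) (mX l) (mZ l).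
  exact: compat_var_msgs_step (check_compat l) (nu_def l) (mu_def l) (mX_def l) (mZ_def l).
split=> [x z|||l j xi zeta|s _ _ l j].
- exact: P4_phivec.
- exact: check_compat.
- exact: var_compat.
- exact: b4_phi (check_compat l) j xi zeta.
- apply: (argmax_by_map (g := fun p : F2 * F2 => phi p.1 p.2) (h := fun a => (xF4 a, zF4 a))
      s (0, 0)) => [a|p]; first exact: phi_xzF4.
  exact: b4_phi (check_compat l) j p.1 p.2.
Qed.
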